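(* Let $\phi(x)=\psi_0(\psi_1(x),\dots,\psi_n(x))$ where $\psi_0(y_1,\dots,y_n)$ is an IPC formula in which each $y_i$ is negative, and each $\psi_i$ ($1\le i\le n$) is an IPC formula in which $x$ is negative (all formulas may contain further parameter variables). Let $H$ be a Heyting algebra and $v$ a valuation of the parameters in $H$; write $\psi_j$ also for the induced functions. Then the monotone map $G:H^n\to H^n$, $G(\vec y)=(\psi_1(\psi_0(\vec y)),\dots,\psi_n(\psi_0(\vec y)))$, has a greatest fixed point $(\nu_1,\dots,\nu_n)$ (coordinatewise order), the map $F(h)=[\![\phi]\!]_{(v,h/x)}$ has a least fixed point, and $\mu.F=\psi_0(\nu_1,\dots,\nu_n)$.
   Context: An occurrence of a variable is negative in a formula if the path in the syntax tree from the root to it passes through an odd number of nodes labelled by an implication $\chi_1\to\chi_2$ whose successor on the path is $\chi_1$; a variable is negative in a formula if all its occurrences are negative. *)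

From mathcomp Require Import all_boot.
Set Implicit Arguments. Unset Strict Implicit. Unset Printing Implicit Defensive.

Record heyting := Heyting {
  hcar :> Type;
  hle : hcar -> hcar -> Prop;
  hmeet : hcar -> hcar -> hcar;
  hjoin : hcar -> hcar -> hcar;
  himp : hcar -> hcar -> hcar;
  htop : hcar;
  hbot : hcar;
  hle_refl : forall a, hle a a;
  hle_trans : forall a b c, hle a b -> hle b c -> hle a c;
  hle_antisym : forall a b, hle a b -> hle b a -> a = b;
  hmeet_l : forall a b, hle (hmeet a b) a;
  hmeet_r : forall a b, hle (hmeet a b) b;
  hmeet_glb : forall a b c, hle c a -> hle c b -> hle c (hmeet a b);
  hjoin_l : forall a b, hle a (hjoin a b);
  hjoin_r : forall a b, hle b (hjoin a b);
  hjoin_lub : forall a b c, hle a c -> hle b c -> hle (hjoin a b) c;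
  hbot_least : forall a, hle hbot a;
  htop_greatest : forall a, hle a htop;
  himp_adj : forall a b c, hle c (himp a b) <-> hle (hmeet c a) b
}.

Inductive form (A : Type) : Type :=
| FVar of A
| FBot
| FTop
| FAnd of form A & form A
| FOr of form A & form A
| FImp of form A & form A.
Arguments FBot {A}. Arguments FTop {A}.

Fixpoint fsubst (A B : Type) (s : A -> form B) (f : form A) : form B :=
  match f with
  | FVar a => s a
  | FBot => FBot
  | FTop => FTop
  | FAnd f g => FAnd (fsubst s f) (fsubst s g)
  | FOr f g => FOr (fsubst s f) (fsubst s g)
  | FImp f g => FImp (fsubst s f) (fsubst s g)
  end.

Fixpoint feval (H : heyting) (A : Type) (e : A -> H) (f : form A) : H :=
  match f with
  | FVar a => e a
  | FBot => hbot H
  | FTop => htop H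
  | FAnd f g => hmeet (feval e f) (feval e g)
  | FOr f g => hjoin (feval e f) (feval e g)
  | FImp f g => himp (feval e f) (feval e g)
  end.

(* all_odd isx par f : every occurrence of an atom satisfying isx in f is
   reached by a path with an odd number of "antecedent" steps through
   implications, given that the path so far has parity par (true = odd). *)
Fixpoint all_odd (A : Type) (isx : A -> Prop) (par : bool) (f : form A) : Prop :=
  match f with
  | FVar a => isx a -> par = true
  | FBot | FTop => True
  | FAnd f g | FOr f g => all_odd isx par f /\ all_odd isx par g
  | FImp f g => all_odd isx (~~ par) f /\ all_odd isx par g
  end.

Definition negative_in (A : Type) (isx : A -> Prop) (f : form A) : Prop :=
  all_odd isx false f.

Definition is_lfp (H : heyting) (F : H -> H) (m : H) : Prop :=
  F m = m /\ forall z, F z = z -> hle m z.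

Definition is_gfp_vec (H : heyting) (n : nat) (G : ('I_n -> H) -> ('I_n -> H))
  (nu : 'I_n -> H) : Prop :=
  (forall i, G nu i = nu i) /\
  forall z, (forall i, G z i = z i) -> forall i, hle (z i) (nu i).

From mathcomp Require Import all_boot.

Set Implicit Arguments. Unset Strict Implicit. Unset Printing Implicit Defensive.

(* Write [x <=_c y] for [c /\ x <= y] ([rel_le]).  A formula is
   [<=_c]-antitone in atoms that occur only negatively, so [f := Psi0] and
   each [g_i := psi_i] are [<=_c]-antitone.  For the descending iterates
   [Y_k := G^k(top)] of [G := g o f] one shows [f (Y_(k+1)) <=_c f (Y_k)]
   whenever [c] lies below [|I| - k] coordinates of [Y_(k+1)]: each missing
   coordinate [i] is supplied by antitonicity of [g_i] relative to
   [c /\ Y_k i], one stage earlier.  With [c := Y_(|I|+1) i] this gives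
   [Y_(|I|+1) = Y_(|I|+2)], the greatest fixed point of [G]; by the rolling
   rule [f] of it is the least fixed point of [f o g], the semantics of
   [phi]. *)

Definition rel_le (H : heyting) (c x y : H) : Prop := hle (hmeet c x) y.

Section RelativeOrder.
Variables (H : heyting) (c : H).
Implicit Types x y : H.

Lemma hmeet_le2 (a a' b b' : H) : hle a a' -> hle b b' -> hle (hmeet a b) (hmeet a' b').
Proof.
move=> le_a le_b; apply: hmeet_glb.
- exact: hle_trans (hmeet_l _ _) le_a.
- exact: hle_trans (hmeet_r _ _) le_b.
Qed.

Lemma hmeetC_le (a b : H) : hle (hmeet a b) (hmeet b a).
Proof. by apply: hmeet_glb; [apply: hmeet_r | apply: hmeet_l]. Qed.

Lemma rel_le_refl x : rel_le c x x.
Proof. exact: hmeet_r. Qed.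

Lemma rel_leW x y : hle x y -> rel_le c x y.
Proof. exact: hle_trans (hmeet_r _ _). Qed.

Lemma rel_le_top x y : rel_le (htop H) x y -> hle x y.
Proof.
apply: hle_trans; apply: hmeet_glb; [exact: htop_greatest | exact: hle_refl].
Qed.

Lemma rel_leE x y : rel_le c x y <-> hle x (himp c y).
Proof.
split=> [le_xy | /himp_adj le_xy].
- by apply/himp_adj; apply: hle_trans le_xy; apply: hmeetC_le.
- exact: hle_trans (hmeetC_le _ _) le_xy.
Qed.

Lemma rel_le_meet x x' y y' :
  rel_le c x x' -> rel_le c y y' -> rel_le c (hmeet x y) (hmeet x' y').
Proof.
move=> le_x le_y; apply: hmeet_glb.
- by apply: hle_trans le_x; apply: hmeet_le2 (hle_refl _) (hmeet_l _ _).
- by apply: hle_trans le_y; apply: hmeet_le2 (hle_refl _) (hmeet_r _ _).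
Qed.

Lemma rel_le_join x x' y y' :
  rel_le c x x' -> rel_le c y y' -> rel_le c (hjoin x y) (hjoin x' y').
Proof.
move=> le_x le_y; apply/rel_leE; apply: hjoin_lub; apply/rel_leE.
- exact: hle_trans le_x (hjoin_l _ _).
- exact: hle_trans le_y (hjoin_r _ _).
Qed.

Lemma rel_le_imp x x' y y' :
  rel_le c x' x -> rel_le c y y' -> rel_le c (himp x y) (himp x' y').
Proof.
move=> le_x le_y; apply/himp_adj; apply: hle_trans le_y; apply: hmeet_glb.
  exact: hle_trans (hmeet_l _ _) (hmeet_l _ _).
have mp : hle (hmeet (himp x y) x) y by apply/himp_adj; apply: hle_refl.
apply: hle_trans mp; apply: hmeet_glb.
  exact: hle_trans (hmeet_l _ _) (hmeet_r _ _).
by apply: hle_trans le_x; apply: hmeet_le2 (hmeet_l _ _) (hle_refl _).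
Qed.

End RelativeOrder.

Lemma feval_ext (H : heyting) (A : Type) (e e' : A -> H) (f : form A) :
  (forall a, e a = e' a) -> feval e f = feval e' f.
Proof. by move=> eq_e; elim: f => //= f IHf g IHg; rewrite IHf IHg. Qed.

Lemma feval_fsubst (H : heyting) (A B : Type) (e : B -> H) (s : A -> form B) (f : form A) :
  feval e (fsubst s f) = feval (fun a => feval e (s a)) f.
Proof. by elim: f => //= f IHf g IHg; rewrite IHf IHg. Qed.

Lemma all_odd_exists (A I : Type) (isx : I -> A -> Prop) (f : form A) (par : bool) :
  (forall i, all_odd (isx i) par f) -> all_odd (fun a => exists i, isx i a) par f.
Proof.
elim: f par => //= [a|f IHf g IHg|f IHf g IHg|f IHf g IHg] par odd_f.
- by case=> i; apply: odd_f.
- by split; [apply: IHf => i; case: (odd_f i) | apply: IHg => i; case: (odd_f i)].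
- by split; [apply: IHf => i; case: (odd_f i) | apply: IHg => i; case: (odd_f i)].
- by split; [apply: IHf => i; case: (odd_f i) | apply: IHg => i; case: (odd_f i)].
Qed.

Section FormulaPolarity.
Variables (H : heyting) (A : Type) (isx : A -> Prop) (c : H) (e e' : A -> H).
Hypothesis rel_le_e : forall a, rel_le c (e a) (e' a).
Hypothesis rel_le_e'_off_isx : forall a, isx a \/ rel_le c (e' a) (e a).

(* [par = true] is an even number of antecedent steps: [f] is then
   relatively monotone in the atoms of [isx], otherwise relatively antitone. *)
Lemma feval_rel_le (f : form A) (par : bool) : all_odd isx par f ->
  if par then rel_le c (feval e f) (feval e' f) else rel_le c (feval e' f) (feval e f).
Proof.
elim: f par => /= [a|||f IHf g IHg|f IHf g IHg|f IHf g IHg] par.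
- case: (rel_le_e'_off_isx a) => [isx_a /(_ isx_a) -> // | le_e'].
  by case: par.
- by case: par => _; apply: rel_le_refl.
- by case: par => _; apply: rel_le_refl.
- by case=> /IHf le_f /IHg le_g; case: par le_f le_g => /=; apply: rel_le_meet.
- by case=> /IHf le_f /IHg le_g; case: par le_f le_g => /=; apply: rel_le_join.
- by case=> /IHf le_f /IHg le_g; case: par le_f le_g => /=; apply: rel_le_imp.
Qed.

Lemma negative_feval_rel_le (f : form A) :
  negative_in isx f -> rel_le c (feval e' f) (feval e f).
Proof. exact: (feval_rel_le (par := false)). Qed.

End FormulaPolarity.

Lemma is_lfp_ext (H : heyting) (F F' : H -> H) (m : H) :
  (forall h, F h = F' h) -> is_lfp F' m -> is_lfp F m.
Proof. by move=> eqF [fix_m least_m]; split=> [|z]; rewrite !eqF //; apply: least_m. Qed.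

Section AntitoneComposition.
Variables (H : heyting) (I : finType) (f : (I -> H) -> H) (g : I -> H -> H).
Hypothesis f_rel_anti : forall c y y',
  (forall i, rel_le c (y i) (y' i)) -> rel_le c (f y') (f y).
Hypothesis g_rel_anti : forall i c x x', rel_le c x x' -> rel_le c (g i x') (g i x).

Let G (y : I -> H) : I -> H := fun i => g i (f y).
Let Y (k : nat) : I -> H := iter k G (fun _ => htop H).

Lemma f_anti y y' : (forall i, hle (y i) (y' i)) -> hle (f y') (f y).
Proof. by move=> le_y; apply/rel_le_top/f_rel_anti => i; apply/rel_leW. Qed.

Lemma G_mono y y' : (forall i, hle (y i) (y' i)) -> forall i, hle (G y i) (G y' i).
Proof. by move=> le_y i; apply/rel_le_top/g_rel_anti/rel_leW/f_anti. Qed.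

Lemma Y_succ_le k i : hle (Y k.+1 i) (Y k i).
Proof. by elim: k i => [|k IHk] i; [apply: htop_greatest | apply: G_mono]. Qed.

Lemma rel_le_f_Y k (S : {set I}) c : #|I| <= k + #|S| ->
  (forall i, i \in S -> hle c (Y k.+1 i)) -> rel_le c (f (Y k.+1)) (f (Y k)).
Proof.
elim: k S c => [|k IHk] S c card_S le_c; apply: f_rel_anti => i.
  have S_full : S = setT by apply/eqP; rewrite eqEcard subsetT cardsT.
  by apply: hle_trans (hmeet_l _ _) _; apply: le_c; rewrite S_full inE.
have [iS|iNS] := boolP (i \in S); first exact: hle_trans (hmeet_l _ _) (le_c i iS).
have le_fY : rel_le (hmeet c (Y k.+1 i)) (f (Y k.+1)) (f (Y k)).
  apply: (IHk (i |: S)); first by rewrite cardsU1 iNS add1n addnS -addSn.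
  move=> j; rewrite !inE => /orP[/eqP -> | jS]; first exact: hmeet_r.
  exact: hle_trans (hmeet_l _ _) (hle_trans (le_c j jS) (Y_succ_le _ _)).
apply: hle_trans (g_rel_anti i le_fY); apply: hmeet_glb; [exact: hle_refl | exact: hmeet_r].
Qed.

Lemma Y_fixed i : G (Y #|I|.+1) i = Y #|I|.+1 i.
Proof.
apply: hle_antisym; first exact: (Y_succ_le #|I|.+1 i).
have le_fY : rel_le (Y #|I|.+1 i) (f (Y #|I|.+1)) (f (Y #|I|)).
  apply: (rel_le_f_Y (S := [set i])); first by rewrite cards1 addn1.
  by move=> j; rewrite inE => /eqP ->; apply: hle_refl.
by apply: hle_trans (g_rel_anti i le_fY); apply: hmeet_glb; apply: hle_refl.
Qed.

Lemma fixed_le_Y z k : (forall i, G z i = z i) -> forall i, hle (z i) (Y k i).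
Proof.
move=> fix_z; elim: k => [|k IHk] i; first exact: htop_greatest.
by rewrite -fix_z; apply: G_mono.
Qed.

Lemma gfp_comp_rolling : exists nu : I -> H,
  ((forall i, G nu i = nu i) /\
   forall z, (forall i, G z i = z i) -> forall i, hle (z i) (nu i))
  /\ is_lfp (fun h => f (fun i => g i h)) (f nu).
Proof.
exists (Y #|I|.+1); split; first by split; [apply: Y_fixed | move=> z /fixed_le_Y].
have f_Y : f (G (Y #|I|.+1)) = f (Y #|I|.+1).
  by apply: hle_antisym; apply: f_anti => i; rewrite Y_fixed; apply: hle_refl.
split=> [|z fix_z]; first exact: f_Y.
pose w i := g i z.
have fix_w i : G w i = w i by rewrite /G /w fix_z.
by rewrite -fix_z; apply: f_anti => i; apply: (fixed_le_Y _ fix_w).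
Qed.

End AntitoneComposition.

Theorem mainTheorem16 (n : nat) (P : Type)
  (psi0 : form ('I_n + P)) (psi : 'I_n -> form (option P))
  (hy : forall i : 'I_n, negative_in (fun a => a = inl i) psi0)
  (hx : forall i : 'I_n, negative_in (fun a => a = None) (psi i))
  (H : heyting) (v : P -> H) :
  let phi : form (option P) :=
    fsubst (fun a => match a with inl i => psi i | inr p => FVar (Some p) end) psi0 in
  let envx (h : H) : option P -> H :=
    fun a => match a with None => h | Some p => v p end in
  let envy (y : 'I_n -> H) : 'I_n + P -> H :=
    fun a => match a with inl i => y i | inr p => v p end in
  let Psi0 (y : 'I_n -> H) : H := feval (envy y) psi0 in
  let G (y : 'I_n -> H) : 'I_n -> H := fun i => feval (envx (Psi0 y)) (psi i) in
  let F (h : H) : H := feval (envx h) phi in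
  exists nu : 'I_n -> H, is_gfp_vec G nu /\ is_lfp F (Psi0 nu).
Proof.
move=> phi envx envy Psi0 G F.
have Psi0_rel_anti c y y' :
    (forall i, rel_le c (y i) (y' i)) -> rel_le c (Psi0 y') (Psi0 y).
  move=> le_y; apply: (negative_feval_rel_le (isx := fun a => exists i, a = inl i)).
  - by case=> [i|p] /=; [apply: le_y | apply: rel_le_refl].
  - by case=> [i|p]; [left; exists i | right; apply: rel_le_refl].
  - exact: all_odd_exists.
have psi_rel_anti i c x x' :
    rel_le c x x' -> rel_le c (feval (envx x') (psi i)) (feval (envx x) (psi i)).
  move=> le_x; apply: (negative_feval_rel_le (isx := fun a => a = None)) (hx i).
  - by case=> [p|] /=; [apply: rel_le_refl | apply: le_x].
  - by case=> [p|]; [right; apply: rel_le_refl | left].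
have [nu [gfp_nu lfp_nu]] := gfp_comp_rolling Psi0_rel_anti psi_rel_anti.
exists nu; split=> //; apply: is_lfp_ext lfp_nu => h.
by rewrite /F /phi feval_fsubst; apply: feval_ext => -[i|p].
Qed.
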